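(* Let $\theta_p:C_2^{\rm SLB}(\mathbb Z_p)\to\mathbb Z_p$ be the $2$-cocycle given on generators by \[ \theta_p((a,b),(a,c))=(a-b)\,\frac{(a-b+2c)^p+(a+b)^p-2(a+c)^p}{p}\pmod p \] (computed with integer lifts, numerator in $\mathbb Z$). Let $D$ be a diagram of a Dehn $p$-colorable knot, $C$ a Dehn $p$-coloring of $D$, $s\in\mathbb Z_p^\times$, $t\in\mathbb Z_p$, and $C'=sC+t$ (the map $x\mapsto sC(x)+t$, which is again a Dehn $p$-coloring of $D$). Then \[ \theta_p(W(D,C'))=s^2\,\theta_p(W(D,C)). \]
   Context: Let $p$ be an odd prime, $X=\mathbb Z_p$, $[a,b,c]=a-b+c$, $\rho((a,b))=(b,a)$, $(a,b)\,\underline{\star}\,(a,c)=(c,[a,b,c])$, $(a,b)\,\overline{\star}\,(a,c)=(c,[a,c,b])$. For $n\ge1$ let $C_n^{\rm lb}(X)$ be the free abelian group on tuples $((a,b_1),\dots,(a,b_n))$, $a,b_i\in X$; $D_n^{\rm lb}(X)$ the subgroup generated by tuples with $b_i=b_{i+1}$ for some $i$; $D_n^{\rm lb}(X,\rho)$ the subgroup generated by all $((a,b_1),\dots,(a,b_n))+((a,b_1)\underline\star(a,b_i),\dots,(a,b_{i-1})\underline\star(a,b_i),\rho((a,b_i)),(a,b_{i+1})\overline\star(a,b_i),\dots,(a,b_n)\overline\star(a,b_i))$; and $C_n^{\rm SLB}(X)=C_n^{\rm lb}(X)/(D_n^{\rm lb}(X)+D_n^{\rm lb}(X,\rho))$.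 (The formula for $\theta_p$ is well defined on this quotient.) Dehn $p$-colorings: for a knot diagram $D$ with region set $\mathcal R(D)$, at each crossing label the four regions $x_1,x_2,x_3,x_4$ so that $x_2$ is adjacent to $x_1$ across an under-arc, $x_3$ adjacent to $x_1$ across the over-arc, $x_4$ opposite $x_1$; a Dehn $p$-coloring is $C:\mathcal R(D)\to\mathbb Z_p$ with $C(x_1)+C(x_3)=C(x_2)+C(x_4)$ at every crossing. At each crossing $\chi$ choose a specified region $x_1$, put $a=C(x_1),b=C(x_2),c=C(x_3)$, $w_\chi=\varepsilon((a,b),(a,c))\in C_2^{\rm SLB}(X)$ with $\varepsilon=+1$ if $(n_o,n_u)$ is a positively oriented basis of $\mathbb R^2$ and $-1$ otherwise ($n_u$ the normal vector from $x_1$ to $x_2$, $n_o$ from $x_1$ to $x_3$); $W(D,C)=\sum_\chi w_\chi$, which is independent of the choices of specified regions. *)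

From mathcomp Require Import all_boot all_algebra.
Set Implicit Arguments. Unset Strict Implicit. Unset Printing Implicit Defensive.
Import GRing.Theory.
Local Open Scope ring_scope.

(* Combinatorial model of a knot diagram with n crossings (crossings 'I_n).  *)
(* A dart (c,k) is the k-th ray (half-edge) at crossing c, rays numbered     *)
(* 0,1,2,3 counterclockwise.  Convention: rays 0 and 2 belong to the         *)
(* under-strand, rays 1 and 3 to the over-strand.                            *)
(* [edge] is the fixed-point-free involution gluing the rays into edges.     *)
(* The dart (c,k) also names the corner (angular sector) of crossing c       *)
(* between rays k and k+1 (counterclockwise).  Walking along the boundary of *)
(* a region, the corner following (c,k) is [edge (rotd (c,k))]; regions are  *)
(* the orbits of [face_perm].                                                *)

Definition dart (n : nat) := ('I_n * 'I_4)%type.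

Definition rotd n (d : dart n) : dart n := (d.1, ordS d.2).
Definition oppd n (d : dart n) : dart n := rotd (rotd d).

Record knot_diagram (n : nat) := KnotDiagram {
  edge : dart n -> dart n;
  edge_invol : forall d, edge (edge d) = d;
  edge_nofix : forall d, edge d != d;
  (* one component: following the strand straight through the crossings
     (arrive by d, leave by the opposite ray, follow the edge) every dart is
     reached either as an arriving dart or as a leaving dart *)
  one_component : forall d d' : dart n,
    exists k, (iter k (fun x => edge (oppd x)) d == d')
              || (iter k (fun x => edge (oppd x)) d == oppd d');
  (* planarity (cellular embedding in the sphere): V - E + F = 2,
     with V = n, E = 2n, F = number of regions *)
  planar : fcard (fun d => edge (rotd d)) (predT : {pred dart n}) = (n + 2)%N
}.

Definition face_perm n (D : knot_diagram n) (d : dart n) : dart n :=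
  edge D (rotd d).

Definition corner n (c : 'I_n) (k : nat) : dart n := iter k (@rotd n) (c, ord0).

(* A Dehn p-coloring: a map from regions to Z_p, encoded as a map on corners
   that is constant along each region; at each crossing the two regions on one
   side of the over-arc (corners 0,1) and those on the other side (corners
   3,2) satisfy C(x1)+C(x3) = C(x2)+C(x4) with x1 = corner 0, x2 = corner 3
   (across the under-arc), x3 = corner 1 (across the over-arc),
   x4 = corner 2 (opposite). *)
Definition dehn_coloring (p n : nat) (D : knot_diagram n) (C : dart n -> 'F_p) :=
  (forall d, C (face_perm D d) = C d) /\
  (forall c : 'I_n,
     C (corner c 0) + C (corner c 1) = C (corner c 3) + C (corner c 2)).

(* The Fox coloring induced on edges: each ray (c,k) gets the sum of the two
   regions on both sides of it, i.e. corners (c,k-1) and (c,k). *)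
Definition fox_of n p (C : dart n -> 'F_p) (d : dart n) : 'F_p :=
  C d + C (rotd (rotd (rotd d))).

Definition dehn_colorable (p n : nat) (D : knot_diagram n) :=
  exists C : dart n -> 'F_p, dehn_coloring D C /\
    exists d1 d2, fox_of C d1 != fox_of C d2.

(* Chains: elements of the free abelian group C_2^lb(Z_p) are represented as *)
(* formal integer combinations of generators ((a,b),(a,c)).                  *)

Definition gen2 (p : nat) := (('F_p * 'F_p) * ('F_p * 'F_p))%type.
Definition chain2 (p : nat) := seq (int * gen2 p).

Definition theta_gen (p : nat) (g : gen2 p) : 'F_p :=
  let a := g.1.1 in let b := g.1.2 in let c := g.2.2 in
  let A : int := (nat_of_ord a)%:Z in
  let B : int := (nat_of_ord b)%:Z in
  let Cc : int := (nat_of_ord c)%:Z in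
  let N : int := (A - B + 2 * Cc) ^+ p + (A + B) ^+ p - 2 * (A + Cc) ^+ p in
  (a - b) * ((N %/ (p%:Z))%Z)%:~R.

Definition theta_chain (p : nat) (w : chain2 p) : 'F_p :=
  \sum_(x <- w) (theta_gen x.2 *~ x.1).

(* Representative of W(D,C): at each crossing c the specified region is
   x1 = corner 0; then a = C(x1), b = C(x2) = C(corner 3),
   c = C(x3) = C(corner 1), and the sign is +1 (with rays numbered
   counterclockwise, n_u points from corner 0 to corner 3 and n_o from
   corner 0 to corner 1, and (n_o,n_u) is positively oriented). *)
Definition W_chain (p n : nat) (D : knot_diagram n) (C : dart n -> 'F_p)
  : chain2 p :=
  [seq (1%:Z, ((C (corner c 0), C (corner c 3)), (C (corner c 0), C (corner c 1))))
  | c <- enum 'I_n].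

From mathcomp Require Import all_boot all_algebra finfield ring.
Import GRing.Theory.
Set Implicit Arguments. Unset Strict Implicit. Unset Printing Implicit Defensive.
Local Open Scope ring_scope.

(* Modulo p^2 the numerator
   N(a, b, c) = (a - b + 2c)^p + (a + b)^p - 2(a + c)^p only depends on a, b, c
   modulo p, and it is divisible by p.  Expanding
   (s u + 2t)^p = s^p u^p + (2t)^p + p Q(s u, 2t) shows that replacing a, b, c
   by s a + t, s b + t, s c + t turns N / p modulo p into
   s N / p + f(a - b + 2c) + f(a + b) - 2 f(a + c) with f u = Q(s u, 2t); as
   s^p = s, theta becomes s^2 theta plus s (a - b) (f(a - b + 2c) + f(a + b) -
   2 f(a + c)).  At a crossing this error term is the sum over the four rays of
   (x - y) f(x + y), with x and y the colours of the regions after and before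
   the ray; the two ends of an edge contribute opposite terms, so for odd p the
   error vanishes on W(D, C). *)

Definition binom_cross (R : comNzRingType) (p : nat) (x y : R) : R :=
  \sum_(i < p.+1) x ^+ (p - i) * y ^+ i *+ ('C(p, i) %/ p).

Lemma exprD_prime (R : comNzRingType) (p : nat) (x y : R) : prime p ->
  (x + y) ^+ p = x ^+ p + y ^+ p + binom_cross p x y *+ p.
Proof.
move=> pP; rewrite exprDn /binom_cross -sumrMnl.
under eq_bigr => i _ do rewrite (divn_eq 'C(p, i) p) mulrnDr mulrnA addrC.
rewrite big_split /=; congr (_ + _).
have p_gt1 := prime_gt1 pP; case: p p_gt1 pP => // q p_gt1 pP.
rewrite big_ord_recl big_ord_recr /= big1 => [|i _]; last first.
  by rewrite (eqP (prime_dvd_bin pP _)) ?mulr0n // /bump add1n !ltnS ltn_ord.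
by rewrite /bump !add1n subn0 subnn bin0 binn !modn_small // !expr0 mulr1 mul1r add0r.
Qed.

Lemma rmorph_binom_cross (R S : comNzRingType) (f : {rmorphism R -> S}) p x y :
  f (binom_cross p x y) = binom_cross p (f x) (f y).
Proof.
by rewrite rmorph_sum; apply: eq_bigr => i _; rewrite rmorphMn rmorphM !rmorphXn.
Qed.

Lemma exprD_sqr0 (R : comNzRingType) (x y : R) (n : nat) : y * y = 0 ->
  (x + y) ^+ n = x ^+ n + x ^+ n.-1 * y *+ n.
Proof.
move=> yy; case: n => [|n]; first by rewrite mulr0n addr0.
elim: n => [|n IH]; first by rewrite expr1 expr0 mul1r.
rewrite exprS IH /= [x ^+ n.+2]exprS [x ^+ n.+1]exprS.
transitivity (x * (x * x ^+ n) + x * x ^+ n * y *+ n.+2 + x ^+ n * (y * y) *+ n.+1).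
  by ring.
by rewrite yy mulr0 mul0rn addr0.
Qed.

(* At a crossing with region colours a, b, c and c + a - b, the three arcs carry
   the Fox colours a - b + 2c, a + b (under-arc) and a + c (over-arc). *)
Definition fox_form (R : pzRingType) (f : R -> R) (x y z : R) : R :=
  f (x - y + 2 * z) + f (x + y) - 2 * f (x + z).

Lemma rmorph_fox_form (R S : pzRingType) (phi : {rmorphism R -> S})
    (f : R -> R) (g : S -> S) :
  (forall u, phi (f u) = g (phi u)) ->
  forall x y z, phi (fox_form f x y z) = fox_form g (phi x) (phi y) (phi z).
Proof.
by move=> fg x y z; rewrite /fox_form !(rmorphB, rmorphD, rmorphM, fg) rmorph1.
Qed.

Lemma fox_form_exp_affine (R : comNzRingType) (p : nat) (s t x y z : R) :
  prime p ->
  fox_form (fun u => u ^+ p) (s * x + t) (s * y + t) (s * z + t)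
  = s ^+ p * fox_form (fun u => u ^+ p) x y z
    + fox_form (fun u => binom_cross p (s * u) (2 * t)) x y z *+ p.
Proof.
move=> pP; rewrite /fox_form.
have -> : s * x + t - (s * y + t) + 2 * (s * z + t) = s * (x - y + 2 * z) + 2 * t
  by ring.
have -> : s * x + t + (s * y + t) = s * (x + y) + 2 * t by ring.
have -> : s * x + t + (s * z + t) = s * (x + z) + 2 * t by ring.
by rewrite !(@exprD_prime _ p (s * _) (2 * t)) // !exprMn; ring.
Qed.

Section IntegerLifts.

Variable p : nat.
Hypothesis p_prime : prime p.

Local Notation pi x := (x%:~R : 'F_p).
Local Notation pi2 x := (x%:~R : 'Z_(p * p)).

Let p_gt1 : (1 < p)%N := prime_gt1 p_prime.

Let pp_gt1 : (1 < p * p)%N.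
Proof. by rewrite (leq_trans p_gt1) // leq_pmull // ltnW. Qed.

Let pi_p : pi p = 0 := pchar_Fp_0 p_prime.

Lemma intr_Fp_val (a : 'F_p) : pi (a : nat)%:Z = a.
Proof.
apply: val_inj; rewrite /= val_Fp_nat // modn_small //.
by case: a => a /=; rewrite (Fp_cast p_prime).
Qed.

Lemma expr_Fp (x : 'F_p) : x ^+ p = x.
Proof. by have := expf_card x; rewrite card_Fp. Qed.

Lemma intr_Zpp_eq0 (x : int) : (pi2 x == 0) = (p * p %| x)%Z.
Proof.
have natr_eq0 (k : nat) : ((k%:R : 'Z_(p * p)) == 0) = (p * p %| k)%N.
  by rewrite -(inj_eq val_inj) /= val_Zp_nat.
by case: x => k; rewrite ?NegzE ?mulrNz ?oppr_eq0 natr_eq0.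
Qed.

(* The linear term of (y + kp)^p is p * kp; the higher ones contain (kp)^2. *)
Lemma expr_p_congr (x y : int) : pi x = pi y -> pi2 x ^+ p = pi2 y ^+ p.
Proof.
move/eqP; rewrite -subr_eq0 -rmorphB -(dvdz_pcharf (pchar_Fp p_prime)) /=.
case/dvdzP=> k /(canRL (subrK y)) ->; set e := pi2 (k * p).
have e_p : e * pi2 p = 0.
  by apply/eqP; rewrite -rmorphM intr_Zpp_eq0 -mulrA dvdz_mull.
have e_sq : e * e = 0 by rewrite {2}/e intrM [pi2 k * _]mulrC mulrA e_p mul0r.
rewrite addrC intrD exprD_sqr0 // -mulrnAr -mulr_natr.
by rewrite -[p%:R]/(pi2 p) e_p mulr0 addr0.
Qed.

Lemma fox_form_exp_congr (X Y Z X' Y' Z' : int) :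
  pi X = pi X' -> pi Y = pi Y' -> pi Z = pi Z' ->
  pi2 (fox_form (fun u => u ^+ p) X Y Z) = pi2 (fox_form (fun u => u ^+ p) X' Y' Z').
Proof.
move=> eX eY eZ; have E u v : pi u = pi v -> pi2 (u ^+ p) = pi2 (v ^+ p).
  by rewrite !rmorphXn; exact: expr_p_congr.
rewrite /fox_form !intrB !intrD !intrM; congr (_ + _ - _ * _); apply: E;
  by rewrite !(intrB, intrD, intrM) eX ?eY ?eZ.
Qed.

Lemma fox_form_exp_dvd (X Y Z : int) : (p %| fox_form (fun u => u ^+ p) X Y Z)%Z.
Proof.
rewrite (dvdz_pcharf (pchar_Fp p_prime)) (rmorph_fox_form (fun u => rmorphXn _ p u)).
by rewrite /fox_form !expr_Fp; apply/eqP; ring.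
Qed.

Lemma divz_p_congr (N M : int) : pi2 N = pi2 (p%:Z * M) -> pi (N %/ p)%Z = pi M.
Proof.
move/eqP; rewrite -subr_eq0 -rmorphB intr_Zpp_eq0 => /dvdzP[k] /(canRL (subrK _)).
rewrite PoszM; have -> : k * (p%:Z * p%:Z) + p%:Z * M = (M + k * p%:Z) * p%:Z by ring.
move->; rewrite mulzK ?intrD ?intrM ?pi_p ?mulr0 ?addr0 //.
by rewrite eqz_nat -lt0n ltnW.
Qed.

Lemma divz_fox_form_affine (S T X Y Z X' Y' Z' : int) :
  pi X' = pi (S * X + T) -> pi Y' = pi (S * Y + T) -> pi Z' = pi (S * Z + T) ->
  pi (fox_form (fun u => u ^+ p) X' Y' Z' %/ p)%Z
  = pi S * pi (fox_form (fun u => u ^+ p) X Y Z %/ p)%Z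
    + fox_form (fun u => binom_cross p (pi S * u) (2 * pi T)) (pi X) (pi Y) (pi Z).
Proof.
move=> eX eY eZ; set F := fox_form (fun u => binom_cross p (S * u) (2 * T)) X Y Z.
set n := (fox_form _ X Y Z %/ p)%Z.
have Fn : fox_form (fun u => u ^+ p) X Y Z = n * p by rewrite divzK ?fox_form_exp_dvd.
rewrite (@divz_p_congr _ (S ^+ p * n + F)); last first.
  rewrite (fox_form_exp_congr eX eY eZ) fox_form_exp_affine // Fn.
  by congr (pi2 _); rewrite -mulr_natr; ring.
rewrite rmorphD rmorphM rmorphXn expr_Fp /F.
rewrite (rmorph_fox_form (g := fun u => binom_cross p (pi S * u) (2 * pi T))) //.
by move=> u; rewrite rmorph_binom_cross !rmorphM.
Qed.

Lemma theta_genE (a b a' c : 'F_p) :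
  theta_gen ((a, b), (a', c))
  = (a - b) * pi (fox_form (fun u => u ^+ p) (a : nat)%:Z (b : nat)%:Z (c : nat)%:Z %/ p)%Z.
Proof. by []. Qed.

Lemma theta_gen_affine (s t a b c : 'F_p) :
  theta_gen ((s * a + t, s * b + t), (s * a + t, s * c + t))
  = s ^+ 2 * theta_gen ((a, b), (a, c))
    + s * ((a - b) * fox_form (fun u => binom_cross p (s * u) (2 * t)) a b c).
Proof.
have lift_affine (x : 'F_p) :
    pi (((s * x + t)%R : 'F_p) : nat)%:Z = pi ((s : nat)%:Z * (x : nat)%:Z + (t : nat)%:Z).
  by rewrite intrD intrM !intr_Fp_val.
rewrite !theta_genE (divz_fox_form_affine (lift_affine a) (lift_affine b) (lift_affine c)).
rewrite !intr_Fp_val; set q := _%:~R; set F := fox_form _ a b c.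
have -> : s * a + t - (s * b + t) = s * (a - b) by ring.
by rewrite mulrDr expr2 !mulrA [s * _ * s]mulrAC.
Qed.

End IntegerLifts.

Lemma fox_form_crossing (R : comPzRingType) (f : R -> R) (x0 x1 x2 x3 : R) :
  x0 + x1 = x3 + x2 ->
  (x0 - x3) * f (x3 + x0) + (x1 - x0) * f (x0 + x1)
    + (x2 - x1) * f (x1 + x2) + (x3 - x2) * f (x2 + x3)
  = (x0 - x3) * fox_form f x0 x3 x1.
Proof.
move=> e; have -> : x2 = x0 + x1 - x3 by rewrite e; ring.
rewrite /fox_form.
have -> : x1 + (x0 + x1 - x3) = x0 - x3 + 2 * x1 by ring.
have -> : x0 + x1 - x3 + x3 = x0 + x1 by ring.
rewrite (addrC x3); ring.
Qed.

Definition rotdV n (d : dart n) : dart n := rotd (rotd (rotd d)).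

Lemma rotdK n : cancel (@rotd n) (@rotdV n).
Proof. by case=> c [[|[|[|[|k]]]] Hk] //; congr pair; apply: val_inj. Qed.

Lemma rotdVK n : cancel (@rotdV n) (@rotd n).
Proof. by case=> c [[|[|[|[|k]]]] Hk] //; congr pair; apply: val_inj. Qed.

Lemma dart_corner n (c : 'I_n) (k : 'I_4) : (c, k) = corner c k.
Proof. by case: k => -[|[|[|[|k]]]] Hk //; congr pair; apply: val_inj. Qed.

Section Telescoping.

Variables (F : idomainType) (n : nat) (D : knot_diagram n) (C : dart n -> F).
Hypothesis two_neq0 : 2 != 0 :> F.
Hypothesis C_face : forall d, C (face_perm D d) = C d.
Hypothesis C_crossing : forall c : 'I_n,
  C (corner c 0) + C (corner c 1) = C (corner c 3) + C (corner c 2).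

Lemma C_edge d : C (edge D d) = C (rotdV d).
Proof. by rewrite -[RHS]C_face /face_perm rotdVK. Qed.

(* The ray d separates the corners rotdV d and d; the edge through d swaps them. *)
Lemma sum_darts_eq0 (f : F -> F) :
  \sum_(d : dart n) (C d - C (rotdV d)) * f (C (rotdV d) + C d) = 0.
Proof.
set S := \sum_(d : dart n) _.
have S_opp : S = - S.
  rewrite -sumrN (reindex_inj (can_inj (@edge_invol _ D))) /=.
  apply: eq_bigr => d _; rewrite -[C (rotdV (edge D d))]C_edge edge_invol C_edge.
  by rewrite -mulNr opprB [in f (C d + _)]addrC.
have : 2 * S == 0 by rewrite mulr_natl mulr2n {2}S_opp addrN.
by rewrite mulf_eq0 (negbTE two_neq0) => /eqP.
Qed.

Lemma sum_crossing_darts (f : F -> F) (c : 'I_n) :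
  \sum_(k < 4) (C (c, k) - C (rotdV (c, k))) * f (C (rotdV (c, k)) + C (c, k))
  = (C (corner c 0) - C (corner c 3))
    * fox_form f (C (corner c 0)) (C (corner c 3)) (C (corner c 1)).
Proof.
rewrite -(fox_form_crossing _ (C_crossing c)).
under eq_bigr => k _ do rewrite dart_corner.
by rewrite !big_ord_recl big_ord0 addr0 !addrA /corner /= !rotdK.
Qed.

Lemma sum_crossings_eq0 (f : F -> F) :
  \sum_(c <- enum 'I_n) (C (corner c 0) - C (corner c 3))
    * fox_form f (C (corner c 0)) (C (corner c 3)) (C (corner c 1)) = 0.
Proof.
rewrite big_enum (eq_bigr _ (fun c _ => esym (sum_crossing_darts f c))) pair_bigA.
by rewrite -[RHS](sum_darts_eq0 f); apply: eq_bigr => -[].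
Qed.

End Telescoping.

Theorem proposition4p5 (p : nat) (p_prime : prime p) (p_odd : odd p)
  (n : nat) (D : knot_diagram n) (Dcol : dehn_colorable p D)
  (C : dart n -> 'F_p) (HC : dehn_coloring D C)
  (s t : 'F_p) (s_unit : s != 0) :
  theta_chain (W_chain D (fun x => s * C x + t))
  = s ^+ 2 * theta_chain (W_chain D C).
Proof.
have two_neq0 : 2 != 0 :> 'F_p.
  by rewrite -(dvdn_pcharf (pchar_Fp p_prime)) dvdn_prime2 //; case: eqP p_odd => // ->.
case: HC => C_face C_crossing.
rewrite /theta_chain /W_chain !big_map -enumT.
under eq_bigr => c _ do rewrite mulr1z theta_gen_affine //.
under [in RHS]eq_bigr => c _ do rewrite mulr1z.
rewrite big_split -!mulr_sumr (sum_crossings_eq0 two_neq0 C_face C_crossing) mulr0.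
exact: addr0.
Qed.
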